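(* Let $X,Y$ be $\mathfrak{Q}$-preordered $\mathfrak{Q}$-subsets and $g\colon\mathsf{P}^{\dagger}Y\to\mathsf{P}^{\dagger}X$ a $\mathfrak{Q}$-order-preserving map. The following are equivalent: (i) $g$ is a right adjoint in $\mathfrak{Q}\text{-}\mathbf{FOrd}$, i.e. there is a $\mathfrak{Q}$-order-preserving $f\colon\mathsf{P}^{\dagger}X\to\mathsf{P}^{\dagger}Y$ with $f\dashv g$ (a dual $\mathfrak{Q}$-axiality from $X$ to $Y$); (ii) $g$ is a right adjoint between the underlying preordered sets of $\mathsf{P}^{\dagger}Y$ and $\mathsf{P}^{\dagger}X$, and $g(\lambda\circ v)=g\lambda\circ v$ for all $\lambda\in\mathsf{P}^{\dagger}Y$, $q\in\mathfrak{Q}$ and $v\in\mathcal{D}\mathfrak{Q}(q,|\lambda|)$; (iii) $g$ is a right adjoint between the underlying preordered sets of $\mathsf{P}^{\dagger}Y$ and $\mathsf{P}^{\dagger}X$, and $g(\mathsf{y}^{\dagger}_Y y\circ v)=g\mathsf{y}^{\dagger}_Y y\circ v$ for all $y\in Y$, $q\in\mathfrak{Q}$ and $v\in\mathcal{D}\mathfrak{Q}(q,|y|)$.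
   Context: $(\mathfrak{Q},\&,e)$ is a non-trivial unital quantale (complete lattice with associative multiplication with unit $e$ preserving joins in each variable, $\bot<e$), implications $p\& q\le r\iff p\le r/ q\iff q\le p\backslash r$, and $\mathcal{D}\mathfrak{Q}(p,q)=\{u\mid (u/ p)\& p=u=q\&(q\backslash u)\}$. A $\mathfrak{Q}$-subset is a set $X$ with $|\cdot|\colon X\to\mathfrak{Q}$; $\mathbf{1}_q$ is the singleton $\{*\}$ with $|*|=q$, and $v\in\mathcal{D}\mathfrak{Q}(p,q)$ is identified with the $\mathfrak{Q}$-relation from $\mathbf{1}_p$ to $\mathbf{1}_q$ with value $v$. A $\mathfrak{Q}$-relation from $X$ to $Y$ is a map $\phi\colon X\times Y\to\mathfrak{Q}$ with $\phi(x,y)\in\mathcal{D}\mathfrak{Q}(|x|,|y|)$, ordered pointwise; composition $(\psi\circ\phi)(x,z)=\bigvee_y(\psi(y,z)/|y|)\&\phi(x,y)$; $\xi\swarrow\phi$ is the largest $\psi'$ with $\psi'\circ\phi\le\xi$, and $\psi\searrow\xi$ the largest $\phi'$ with $\psi\circ\phi'\le\xi$. $\mathrm{id}_X(x,x)=|x|$, $\bot$ elsewhere. A $\mathfrak{Q}$-preordered $\mathfrak{Q}$-subset is a $\mathfrak{Q}$-subset $X$ with a $\mathfrak{Q}$-relation $1_X^{\natural}$ from $X$ to $X$ with $\mathrm{id}_X\le 1_X^{\natural}$ and $1_X^{\natural}\circ 1_X^{\natural}\le 1_X^{\natural}$; its underlying preorder is $x\le y\iff |x|=|y|$ and $|x|\le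 1_X^{\natural}(x,y)$. A $\mathfrak{Q}$-order-preserving map $f$ satisfies $|fx|=|x|$ and $1_X^{\natural}(x,x')\le 1_Y^{\natural}(fx,fx')$; $f\le g$ means $|x|\le 1_Y^{\natural}(fx,gx)$ for all $x$; $f\dashv g$ means $1_X\le gf$ and $fg\le 1_Y$; $\mathfrak{Q}\text{-}\mathbf{FOrd}$ is the category of $\mathfrak{Q}$-preordered $\mathfrak{Q}$-subsets and $\mathfrak{Q}$-order-preserving maps. The dual $\mathfrak{Q}$-powerset $\mathsf{P}^{\dagger}X$ consists of the potential upper $\mathfrak{Q}$-subsets, i.e. $\mathfrak{Q}$-relations $\lambda$ from some $\mathbf{1}_q$ to $X$ with $1_X^{\natural}\circ\lambda\le\lambda$, with $|\lambda|=q$ and $\mathfrak{Q}$-preorder $1_{\mathsf{P}^{\dagger}X}^{\natural}(\lambda,\lambda')=\lambda'\searrow\lambda$ (so its underlying order is the reverse of the pointwise order among elements of equal membership). The co-Yoneda embedding $\mathsf{y}^{\dagger}_X\colon X\to\mathsf{P}^{\dagger}X$ sends $x$ to $1_X^{\natural}(x,-)$, a $\mathfrak{Q}$-relation from $\mathbf{1}_{|x|}$ to $X$. *)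

Unset Implicit Arguments.
Unset Strict Implicit.

Record Quantale := {
  qc :> Type;
  qle : qc -> qc -> Prop;
  qsup : (qc -> Prop) -> qc;
  qmul : qc -> qc -> qc;
  qe : qc;
  qle_refl : forall x, qle x x;
  qle_trans : forall x y z, qle x y -> qle y z -> qle x z;
  qle_anti : forall x y, qle x y -> qle y x -> x = y;
  qsup_ub : forall (S : qc -> Prop) x, S x -> qle x (qsup S);
  qsup_least : forall (S : qc -> Prop) u, (forall x, S x -> qle x u) -> qle (qsup S) u;
  qmul_assoc : forall x y z, qmul (qmul x y) z = qmul x (qmul y z);
  qmul_e_l : forall x, qmul qe x = x;
  qmul_e_r : forall x, qmul x qe = x;
  qmul_sup_l : forall a (S : qc -> Prop),
      qmul a (qsup S) = qsup (fun y => exists x, S x /\ y = qmul a x);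
  qmul_sup_r : forall (S : qc -> Prop) a,
      qmul (qsup S) a = qsup (fun y => exists x, S x /\ y = qmul x a);
  q_nontriv : qsup (fun _ => False) <> qe
}.

Arguments qle {_}. Arguments qsup {_}. Arguments qmul {_}. Arguments qe {_}.

Section QuantaleDefs.
Variable Q : Quantale.

Definition qbot : Q := qsup (fun _ => False).

(** Implications: [p & q <= r <-> p <= r / q <-> q <= p \ r]. *)
Definition qrdiv (r q : Q) : Q := qsup (fun p => qle (qmul p q) r).
Definition qldiv (p r : Q) : Q := qsup (fun q => qle (qmul p q) r).

Definition inDQ (u p q : Q) : Prop :=
  qmul (qrdiv u p) p = u /\ u = qmul q (qldiv q u).

Record Qsubset := { qs_car :> Type; qs_mem : qs_car -> Q }.
Arguments qs_mem {_} _.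

Definition one_q (q : Q) : Qsubset := {| qs_car := unit; qs_mem := fun _ => q |}.

Definition is_Qrel (X Y : Qsubset) (phi : X -> Y -> Q) : Prop :=
  forall x y, inDQ (phi x y) (qs_mem x) (qs_mem y).

Definition rel_le (X Y : Qsubset) (phi psi : X -> Y -> Q) : Prop :=
  forall x y, qle (phi x y) (psi x y).

Definition comp (X Y Z : Qsubset) (psi : Y -> Z -> Q) (phi : X -> Y -> Q)
  : X -> Z -> Q :=
  fun x z => qsup (fun a => exists y : Y, a = qmul (qrdiv (psi y z) (qs_mem y)) (phi x y)).

(** id_X(x,x) = |x|, ⊥ elsewhere. *)
Definition id_rel (X : Qsubset) : X -> X -> Q :=
  fun x y => qsup (fun a => x = y /\ a = qs_mem x).

Definition rimp (X Y Z : Qsubset) (psi : Y -> Z -> Q) (xi : X -> Z -> Q)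
  : X -> Y -> Q :=
  fun x y => qsup (fun a => exists phi : X -> Y -> Q,
                     is_Qrel X Y phi /\ rel_le X Z (comp X Y Z psi phi) xi /\ a = phi x y).

Record QPOS := { qp_sub :> Qsubset; qp_one : qp_sub -> qp_sub -> Q }.
Arguments qp_one : clear implicits.

Definition is_QPreord (X : QPOS) : Prop :=
  is_Qrel X X (qp_one X) /\
  rel_le X X (id_rel X) (qp_one X) /\
  rel_le X X (comp X X X (qp_one X) (qp_one X)) (qp_one X).

Record PD (X : QPOS) := {
  pd_q : Q;
  pd_rel : qs_car (one_q pd_q) -> qs_car X -> Q;
  pd_isrel : is_Qrel (one_q pd_q) X pd_rel;
  pd_upper : rel_le (one_q pd_q) X (comp (one_q pd_q) X X (qp_one X) pd_rel) pd_rel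
}.
Arguments pd_q {X} _. Arguments pd_rel {X} _ _ _.

Definition PDual (X : QPOS) : QPOS :=
  {| qp_sub := {| qs_car := PD X; qs_mem := @pd_q X |};
     qp_one := fun l l' =>
       rimp (one_q (pd_q l)) (one_q (pd_q l')) X (pd_rel l') (pd_rel l) tt tt |}.

Definition ule {X : QPOS} (x y : X) : Prop :=
  qs_mem x = qs_mem y /\ qle (qs_mem x) (qp_one X x y).

Definition qmono (X Y : QPOS) (f : X -> Y) : Prop :=
  (forall x, qs_mem (f x) = qs_mem x) /\
  (forall x x', qle (qp_one X x x') (qp_one Y (f x) (f x'))).

Definition map_le (X Y : QPOS) (f g : X -> Y) : Prop :=
  forall x, qle (qs_mem x) (qp_one Y (f x) (g x)).

Definition qadj (X Y : QPOS) (f : X -> Y) (g : Y -> X) : Prop :=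
  map_le X X (fun x => x) (fun x => g (f x)) /\
  map_le Y Y (fun y => f (g y)) (fun y => y).

Definition preord_right_adjoint (X Y : QPOS) (g : Y -> X) : Prop :=
  exists f : X -> Y,
    (forall a b, ule a b -> ule (f a) (f b)) /\
    (forall a b, ule a b -> ule (g a) (g b)) /\
    (forall a, ule a (g (f a))) /\
    (forall b, ule (f (g b)) b).

Definition scal_comp (X : QPOS) (q : Q) (l : PD X) (v : Q)
  : qs_car (one_q q) -> qs_car X -> Q :=
  comp (one_q q) (one_q (pd_q l)) X (pd_rel l) (fun _ _ => v).

Definition pd_is (X : QPOS) (l : PD X) (q : Q) (r : unit -> qs_car X -> Q) : Prop :=
  pd_q l = q /\ forall u x, pd_rel l u x = r u x.

Definition yoneda_rel (Y : QPOS) (y : Y) : unit -> qs_car Y -> Q :=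
  fun _ y' => qp_one Y y y'.

End QuantaleDefs.

Arguments qs_mem {Q q} _. Arguments qp_one {Q} _ _ _.
Arguments pd_q {Q X} _. Arguments pd_rel {Q X} _ _ _.
Arguments one_q {Q} _. Arguments inDQ {Q} _ _ _.
Arguments qmono {Q} _ _ _. Arguments qadj {Q} _ _ _ _.
Arguments PDual {Q} _. Arguments preord_right_adjoint {Q} _ _ _.
Arguments scal_comp {Q X} _ _ _ _. Arguments pd_is {Q X} _ _ _.
Arguments yoneda_rel {Q Y} _ _ _.
Arguments is_QPreord {Q} _. Arguments PD {Q} _. Arguments ule {Q X} _ _.

(* The underlying order of P†X is reverse pointwise inclusion, and the Q-valued order is
   recovered from it through composites with scalars: w ≤ 1(a,b) iff a ⊑ b ∘ w.  Hence a
   preorder adjunction f ⊣ g on dual powersets is a Q-adjunction exactly when g commutes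
   with every composite λ ∘ v, which gives (i) ⇔ (ii).  For (iii) ⇒ (ii), every λ ∈ P†Y is
   the join of the y†y ∘ λ(y), and g, being a right adjoint, preserves the
   corresponding meets in the underlying order. *)

From Stdlib Require Import Setoid.

Local Infix "≤" := qle (at level 70, no associativity).
Local Infix "⊗" := qmul (at level 40, left associativity).
Local Notation "r // p" := (qrdiv _ r p) (at level 40, left associativity).
Local Notation "a ⊑ b" := (@ule _ (PDual _) a b) (at level 70).

Section QuantaleArithmetic.
Context {Q : Quantale}.
Implicit Types a b c p q r u v : Q.

Lemma qle_sup_pair a b : a ≤ b -> b = qsup (fun x => x = a \/ x = b).
Proof.
  intros Hab. apply qle_anti.
  - apply qsup_ub. now right.
  - apply qsup_least. intros x [-> | ->]; [exact Hab | apply qle_refl].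
Qed.

Lemma qmul_mono_r c a b : a ≤ b -> c ⊗ a ≤ c ⊗ b.
Proof.
  intros Hab. rewrite (qle_sup_pair a b Hab), qmul_sup_l.
  apply qsup_ub. exists a. split; [now left | reflexivity].
Qed.

Lemma qmul_mono_l c a b : a ≤ b -> a ⊗ c ≤ b ⊗ c.
Proof.
  intros Hab. rewrite (qle_sup_pair a b Hab), qmul_sup_r.
  apply qsup_ub. exists a. split; [now left | reflexivity].
Qed.

Lemma rdiv_counit r q : (r // q) ⊗ q ≤ r.
Proof.
  unfold qrdiv. rewrite qmul_sup_r. apply qsup_least.
  now intros y [x [Hx ->]].
Qed.

Lemma ldiv_counit p r : p ⊗ qldiv Q p r ≤ r.
Proof.
  unfold qldiv. rewrite qmul_sup_l. apply qsup_least.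
  now intros y [x [Hx ->]].
Qed.

Lemma rdiv_intro p q r : p ⊗ q ≤ r -> p ≤ r // q.
Proof. intros H. now apply qsup_ub. Qed.

Lemma ldiv_intro p q r : p ⊗ q ≤ r -> q ≤ qldiv Q p r.
Proof. intros H. now apply qsup_ub. Qed.

Lemma rdiv_mono a b p : a ≤ b -> a // p ≤ b // p.
Proof.
  intros Hab. apply rdiv_intro.
  apply qle_trans with a; [apply rdiv_counit | exact Hab].
Qed.

Lemma ldiv_mono a b p : a ≤ b -> qldiv Q p a ≤ qldiv Q p b.
Proof.
  intros Hab. apply ldiv_intro.
  apply qle_trans with a; [apply ldiv_counit | exact Hab].
Qed.

Lemma qe_le_rdiv p r : p ≤ r -> qe ≤ r // p.
Proof. intros H. apply rdiv_intro. now rewrite qmul_e_l. Qed.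

Lemma inDQ_sup (S : Q -> Prop) p q :
  (forall u, S u -> inDQ u p q) -> inDQ (qsup S) p q.
Proof.
  intros HS. split; apply qle_anti.
  - apply rdiv_counit.
  - apply qsup_least. intros u Hu. destruct (HS u Hu) as [Hu1 _].
    rewrite <- Hu1 at 1. apply qmul_mono_l, rdiv_mono. now apply qsup_ub.
  - apply qsup_least. intros u Hu. destruct (HS u Hu) as [_ Hu2].
    rewrite Hu2 at 1. apply qmul_mono_r, ldiv_mono. now apply qsup_ub.
  - apply ldiv_counit.
Qed.

Lemma inDQ_refl p : inDQ p p p.
Proof.
  split; apply qle_anti.
  - apply rdiv_counit.
  - rewrite <- (qmul_e_l _ p) at 1. apply qmul_mono_l, qe_le_rdiv, qle_refl.
  - rewrite <- (qmul_e_r _ p) at 1. apply qmul_mono_r, ldiv_intro.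
    rewrite qmul_e_r. apply qle_refl.
  - apply ldiv_counit.
Qed.

Lemma inDQ_comp a v p q r :
  inDQ a p r -> inDQ v q p -> inDQ ((a // p) ⊗ v) q r.
Proof.
  intros [Ha1 Ha2] [Hv1 Hv2].
  assert (Hcomp : (a // p) ⊗ v = a ⊗ qldiv Q p v).
  { rewrite Hv2 at 1. now rewrite <- qmul_assoc, Ha1. }
  split; apply qle_anti.
  - apply rdiv_counit.
  - rewrite <- Hv1 at 1. rewrite <- qmul_assoc.
    apply qmul_mono_l, rdiv_intro. rewrite qmul_assoc, Hv1. apply qle_refl.
  - rewrite Hcomp at 1. rewrite Ha2 at 1. rewrite qmul_assoc.
    apply qmul_mono_r, ldiv_intro. rewrite <- qmul_assoc, <- Ha2, <- Hcomp. apply qle_refl.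
  - apply ldiv_counit.
Qed.

End QuantaleArithmetic.

Section DualPowerset.
Context {Q : Quantale} {X : QPOS Q}.

Lemma comp_one_q (q p : Q) (Z : Qsubset Q) (rho : unit -> Z -> Q) (phi : unit -> unit -> Q) u z :
  comp Q (one_q q) (one_q p) Z rho phi u z = (rho tt z // p) ⊗ phi u tt.
Proof.
  apply qle_anti.
  - apply qsup_least. intros a [[] ->]. apply qle_refl.
  - apply qsup_ub. now exists tt.
Qed.

Lemma scal_compE q (l : PD X) v u x :
  scal_comp q l v u x = (pd_rel l tt x // pd_q l) ⊗ v.
Proof. apply comp_one_q. Qed.

Lemma pd_rel_DQ (l : PD X) x : inDQ (pd_rel l tt x) (pd_q l) (qs_mem x).
Proof. exact (pd_isrel Q X l tt x). Qed.

Lemma pd_rel_upper (l : PD X) x x' : (qp_one X x x' // qs_mem x) ⊗ pd_rel l tt x ≤ pd_rel l tt x'.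
Proof.
  apply qle_trans with (2 := pd_upper Q X l tt x').
  apply qsup_ub. now exists x.
Qed.

Lemma one_PDual_DQ (l l' : PD X) : inDQ (qp_one (PDual X) l l') (pd_q l) (pd_q l').
Proof. apply inDQ_sup. intros a [phi [Hphi [_ ->]]]. exact (Hphi tt tt). Qed.

Lemma one_PDual_ub (l l' : PD X) w :
  inDQ w (pd_q l) (pd_q l') ->
  (forall x, (pd_rel l' tt x // pd_q l') ⊗ w ≤ pd_rel l tt x) ->
  w ≤ qp_one (PDual X) l l'.
Proof.
  intros Hw Hle. apply qsup_ub. exists (fun _ _ => w). split; [| split].
  - intros u u'. exact Hw.
  - intros [] x. rewrite comp_one_q. apply Hle.
  - reflexivity.
Qed.

Lemma one_PDual_act (l l' : PD X) x :
  (pd_rel l' tt x // pd_q l') ⊗ qp_one (PDual X) l l' ≤ pd_rel l tt x.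
Proof.
  simpl; unfold rimp. rewrite qmul_sup_l. apply qsup_least.
  intros b [a [[phi [_ [Hle ->]]] ->]].
  specialize (Hle tt x). now rewrite comp_one_q in Hle.
Qed.

Lemma ule_PD_intro (l l' : PD X) :
  pd_q l = pd_q l' -> (forall x, pd_rel l' tt x ≤ pd_rel l tt x) -> l ⊑ l'.
Proof.
  intros Hq Hle. split; [exact Hq |].
  apply one_PDual_ub.
  - simpl. rewrite <- Hq. apply inDQ_refl.
  - intros x. simpl. rewrite Hq. destruct (pd_rel_DQ l' x) as [Hx _].
    rewrite Hx. apply Hle.
Qed.

Lemma ule_PD_q (l l' : PD X) : l ⊑ l' -> pd_q l = pd_q l'.
Proof. intros H. exact (proj1 H). Qed.

Lemma ule_PD_rel (l l' : PD X) x : l ⊑ l' -> pd_rel l' tt x ≤ pd_rel l tt x.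
Proof.
  intros [Hq Hle]. simpl in Hq, Hle. destruct (pd_rel_DQ l' x) as [Hx _].
  rewrite <- Hx. apply qle_trans with (2 := one_PDual_act l l' x).
  apply qmul_mono_r. now rewrite <- Hq.
Qed.

Lemma ule_PD_refl (l : PD X) : l ⊑ l.
Proof. apply ule_PD_intro; [reflexivity | intros; apply qle_refl]. Qed.

Lemma ule_PD_trans (l1 l2 l3 : PD X) : l1 ⊑ l2 -> l2 ⊑ l3 -> l1 ⊑ l3.
Proof.
  intros H12 H23. apply ule_PD_intro.
  - exact (eq_trans (ule_PD_q _ _ H12) (ule_PD_q _ _ H23)).
  - intros x. apply qle_trans with (pd_rel l2 tt x); now apply ule_PD_rel.
Qed.

Lemma le_one_PDual_iff (a b mu : PD X) q w :
  pd_q a = q -> inDQ w q (pd_q b) -> pd_is mu q (scal_comp q b w) ->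
  w ≤ qp_one (PDual X) a b <-> a ⊑ mu.
Proof.
  intros Ha Hw [Hmu Hrel]. split.
  - intros Hle. apply ule_PD_intro; [congruence |].
    intros x. rewrite Hrel, scal_compE.
    apply qle_trans with (2 := one_PDual_act a b x). now apply qmul_mono_r.
  - intros Hamu. apply one_PDual_ub; [congruence |].
    intros x. rewrite <- scal_compE with (q := q) (u := tt), <- Hrel.
    now apply ule_PD_rel.
Qed.

Lemma one_PDual_ule_r (a b c : PD X) : b ⊑ c -> qp_one (PDual X) a b ≤ qp_one (PDual X) a c.
Proof.
  intros Hbc. apply one_PDual_ub.
  - rewrite <- (ule_PD_q _ _ Hbc). apply one_PDual_DQ.
  - intros x. apply qle_trans with (2 := one_PDual_act a b x).
    apply qmul_mono_l. rewrite <- (ule_PD_q _ _ Hbc).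
    apply rdiv_mono, ule_PD_rel, Hbc.
Qed.

Definition pd_scal (l : PD X) q v (hv : inDQ v q (pd_q l)) : PD X.
Proof.
  refine {| pd_q := q; pd_rel := scal_comp q l v |}.
  - intros u x. rewrite scal_compE. eapply inDQ_comp; [apply pd_rel_DQ | exact hv].
  - intros u x'. apply qsup_least. intros a [x ->]. rewrite !scal_compE, <- qmul_assoc.
    apply qmul_mono_l, rdiv_intro. rewrite qmul_assoc.
    destruct (pd_rel_DQ l x) as [Hx _]. rewrite Hx. apply pd_rel_upper.
Defined.

Lemma pd_scal_is (l : PD X) q v (hv : inDQ v q (pd_q l)) :
  pd_is (pd_scal l q v hv) q (scal_comp q l v).
Proof. now split. Qed.

Definition pd_yoneda (hX : is_QPreord X) (x : X) : PD X :=
  {| pd_q := qs_mem x; pd_rel := yoneda_rel x;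
     pd_isrel := fun _ x' => proj1 hX x x';
     pd_upper := fun _ x' => proj2 (proj2 hX) x x' |}.

Lemma pd_yoneda_is (hX : is_QPreord X) x : pd_is (pd_yoneda hX x) (qs_mem x) (yoneda_rel x).
Proof. now split. Qed.

Lemma le_one_PDual_yoneda (hX : is_QPreord X) (l : PD X) x :
  pd_rel l tt x ≤ qp_one (PDual X) l (pd_yoneda hX x).
Proof. apply one_PDual_ub; [apply pd_rel_DQ | intros x'; apply pd_rel_upper]. Qed.

(* The underlying order reverses pointwise inclusion, so pointwise joins are meets. *)
Definition pd_sup q (P : PD X -> Prop) (hP : forall l, P l -> pd_q l = q) : PD X.
Proof.
  refine {| pd_q := q; pd_rel := fun _ x => qsup (fun a => exists l, P l /\ a = pd_rel l tt x) |}.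
  - intros u x. apply inDQ_sup. intros a [l [Hl ->]].
    rewrite <- (hP l Hl). apply pd_rel_DQ.
  - intros u x'. apply qsup_least. intros a [x ->].
    rewrite qmul_sup_l. apply qsup_least. intros b [c [[l [Hl ->]] ->]].
    apply qle_trans with (pd_rel l tt x'); [apply pd_rel_upper |].
    apply qsup_ub. now exists l.
Defined.

Lemma pd_sup_ule q (P : PD X -> Prop) hP l : P l -> pd_sup q P hP ⊑ l.
Proof.
  intros Hl. apply ule_PD_intro; [symmetry; now apply hP |].
  intros x. apply qsup_ub. now exists l.
Qed.

End DualPowerset.

Section Adjunctions.
Context {Q : Quantale}.

Lemma QPreord_mem_le_one (A : QPOS Q) (hA : is_QPreord A) (a : A) : qs_mem a ≤ qp_one A a a.
Proof.
  apply qle_trans with (2 := proj1 (proj2 hA) a a).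
  apply qsup_ub. now split.
Qed.

Lemma qmono_ule (A B : QPOS Q) (F : A -> B) :
  qmono A B F -> forall a a', ule a a' -> ule (F a) (F a').
Proof.
  intros [Hmem Hle] a a' [Hq Ha]. split.
  - now rewrite !Hmem.
  - rewrite Hmem. apply qle_trans with (1 := Ha), Hle.
Qed.

Definition preord_adjunction (A B : QPOS Q) (f : A -> B) (g : B -> A) : Prop :=
  (forall a a', ule a a' -> ule (f a) (f a')) /\
  (forall b b', ule b b' -> ule (g b) (g b')) /\
  (forall a, ule a (g (f a))) /\
  (forall b, ule (f (g b)) b).

Lemma qadj_preord_adjunction (A B : QPOS Q) f g :
  qmono A B f -> qmono B A g -> qadj A B f g -> preord_adjunction A B f g.
Proof.
  intros hf hg [Hunit Hcounit]. split; [| split; [| split]].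
  - now apply qmono_ule.
  - now apply qmono_ule.
  - intros a. split; [now rewrite (proj1 hg), (proj1 hf) | apply Hunit].
  - intros b. split; rewrite (proj1 hf), (proj1 hg); [reflexivity | apply Hcounit].
Qed.

Lemma preord_adjunction_mem (A B : QPOS Q) f g :
  qmono B A g -> preord_adjunction A B f g -> forall a, qs_mem (f a) = qs_mem a.
Proof.
  intros hg (_ & _ & Hunit & _) a. rewrite (proj1 (Hunit a)). symmetry. apply (proj1 hg).
Qed.

Lemma qadj_of_preord_adjunction (A B : QPOS Q) f g :
  qmono B A g -> preord_adjunction A B f g -> qadj A B f g.
Proof.
  intros hg adj. pose proof (preord_adjunction_mem A B f g hg adj) as Hfmem.
  destruct adj as (_ & _ & Hunit & Hcounit). split.
  - intros a. apply Hunit.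
  - intros b. destruct (Hcounit b) as [_ Hb].
    now rewrite Hfmem, (proj1 hg) in Hb.
Qed.

End Adjunctions.

Lemma qmono_pd_q {Q : Quantale} {A B : QPOS Q} (g : PD A -> PD B) (l : PD A) :
  qmono (PDual A) (PDual B) g -> pd_q (g l) = pd_q l.
Proof. intros hg. exact (proj1 hg l). Qed.

Section DualAdjunctions.
Context {Q : Quantale} {X Y : QPOS Q}.

Section Transpose.
Variables (f : PD X -> PD Y) (g : PD Y -> PD X).
Hypothesis adj : preord_adjunction (PDual X) (PDual Y) f g.

Lemma adj_ule_l a b : f a ⊑ b -> a ⊑ g b.
Proof.
  destruct adj as (_ & Hg & Hunit & _). intros Hab.
  apply ule_PD_trans with (1 := Hunit a), Hg, Hab.
Qed.

Lemma adj_ule_r a b : a ⊑ g b -> f a ⊑ b.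
Proof.
  destruct adj as (Hf & _ & _ & Hcounit). intros Hab.
  apply ule_PD_trans with (2 := Hcounit b), Hf, Hab.
Qed.

End Transpose.

Definition preserves_scal_comp (g : PD Y -> PD X) : Prop :=
  forall (l : PD Y) (q v : Q), inDQ v q (pd_q l) ->
    forall mu : PD Y, pd_is mu q (scal_comp q l v) ->
    pd_is (g mu) q (scal_comp q (g l) v).

Definition preserves_yoneda_scal_comp (g : PD Y -> PD X) : Prop :=
  forall (y : Y) (q v : Q), inDQ v q (qs_mem y) ->
    forall eta mu : PD Y, pd_is eta (qs_mem y) (yoneda_rel y) ->
    pd_is mu q (scal_comp q eta v) ->
    pd_is (g mu) q (scal_comp q (g eta) v).

Lemma qmono_scal_comp_le (g : PD Y -> PD X) (hg : qmono (PDual Y) (PDual X) g)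
  (l : PD Y) q v (hv : inDQ v q (pd_q l)) mu (hmu : pd_is mu q (scal_comp q l v)) x :
  scal_comp q (g l) v tt x ≤ pd_rel (g mu) tt x.
Proof.
  assert (Hv : v ≤ qp_one (PDual Y) mu l).
  { apply (le_one_PDual_iff mu l mu q v (proj1 hmu) hv hmu), ule_PD_refl. }
  rewrite scal_compE. apply qle_trans with (2 := one_PDual_act (g mu) (g l) x).
  apply qmul_mono_r, qle_trans with (1 := Hv), (proj2 hg).
Qed.

Lemma qadj_preserves_scal_comp (f : PD X -> PD Y) (g : PD Y -> PD X) :
  qmono (PDual X) (PDual Y) f -> qmono (PDual Y) (PDual X) g ->
  qadj (PDual X) (PDual Y) f g -> preserves_scal_comp g.
Proof.
  intros hf hg hfg. pose proof (qadj_preord_adjunction (PDual X) (PDual Y) f g hf hg hfg) as adj.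
  intros l q v hv mu hmu. split; [now rewrite (qmono_pd_q g mu hg), (proj1 hmu) |].
  intros [] x. apply qle_anti; [| exact (qmono_scal_comp_le g hg l q v hv mu hmu x)].
  assert (hv' : inDQ v q (pd_q (g l))) by now rewrite (qmono_pd_q g l hg).
  set (nu := pd_scal (g l) q v hv').
  assert (Hv : v ≤ qp_one (PDual X) nu (g l)).
  { apply (le_one_PDual_iff nu (g l) nu q v eq_refl hv' (pd_scal_is _ _ _ _)), ule_PD_refl. }
  assert (Hfnu : f nu ⊑ mu).
  { apply (le_one_PDual_iff (f nu) l mu q v (qmono_pd_q f nu hf) hv hmu).
    apply qle_trans with (qp_one (PDual Y) (f nu) (f (g l))).
    - apply qle_trans with (1 := Hv), (proj2 hf).
    - apply one_PDual_ule_r, adj. }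
  exact (ule_PD_rel nu (g mu) x (adj_ule_l f g adj nu mu Hfnu)).
Qed.

Lemma preserves_scal_comp_qmono (f : PD X -> PD Y) (g : PD Y -> PD X) :
  qmono (PDual Y) (PDual X) g -> preord_adjunction (PDual X) (PDual Y) f g ->
  preserves_scal_comp g -> qmono (PDual X) (PDual Y) f.
Proof.
  intros hg adj hpres.
  assert (Hfmem : forall a, pd_q (f a) = pd_q a)
    by exact (preord_adjunction_mem (PDual X) (PDual Y) f g hg adj).
  split; [exact Hfmem |]. intros a b.
  set (w := qp_one (PDual X) a b).
  assert (hw : inDQ w (pd_q a) (pd_q (f b))) by (rewrite Hfmem; apply one_PDual_DQ).
  set (nu := pd_scal (f b) (pd_q a) w hw).
  assert (Hgnu := hpres (f b) (pd_q a) w hw nu (pd_scal_is _ _ _ _)).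
  assert (Ha : a ⊑ g nu).
  { apply (le_one_PDual_iff a (g (f b)) (g nu) (pd_q a) w eq_refl); [| exact Hgnu |].
    - now rewrite (qmono_pd_q g (f b) hg).
    - apply one_PDual_ule_r, adj. }
  apply (le_one_PDual_iff (f a) (f b) nu (pd_q a) w (Hfmem a) hw (pd_scal_is _ _ _ _)).
  exact (adj_ule_r f g adj a nu Ha).
Qed.

Lemma map_yoneda_scal_comp_le (hY : is_QPreord Y) (g : PD Y -> PD X)
  (hg : qmono (PDual Y) (PDual X) g) (l : PD Y) (y : Y) v x :
  (pd_rel (g (pd_yoneda hY y)) tt x // qs_mem y) ⊗ ((pd_rel l tt y // pd_q l) ⊗ v)
  ≤ (pd_rel (g l) tt x // pd_q (g l)) ⊗ v.
Proof.
  rewrite <- qmul_assoc. apply qmul_mono_l, rdiv_intro.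
  rewrite (qmono_pd_q g l hg), qmul_assoc, (proj1 (pd_rel_DQ l y)).
  apply qle_trans with (2 := one_PDual_act (g l) (g (pd_yoneda hY y)) x).
  rewrite (qmono_pd_q g _ hg). apply qmul_mono_r.
  apply qle_trans with (1 := le_one_PDual_yoneda hY l y), (proj2 hg).
Qed.

(* c y is the composite l(y) ∘ v.  rho is the meet of the g (y†y ∘ c y); each of these
   lies below l ∘ v after f, hence f rho ⊑ l ∘ v and so g (l ∘ v) lies above rho. *)
Lemma preserves_yoneda_scal_comp_le (hY : is_QPreord Y)
  (f : PD X -> PD Y) (g : PD Y -> PD X) (hg : qmono (PDual Y) (PDual X) g)
  (adj : preord_adjunction (PDual X) (PDual Y) f g) (hpres : preserves_yoneda_scal_comp g)
  (l : PD Y) q v (hv : inDQ v q (pd_q l)) mu (hmu : pd_is mu q (scal_comp q l v)) x :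
  pd_rel (g mu) tt x ≤ scal_comp q (g l) v tt x.
Proof.
  set (c := fun y => (pd_rel l tt y // pd_q l) ⊗ v).
  assert (hc : forall y, inDQ (c y) q (qs_mem y)).
  { intros y. eapply inDQ_comp; [apply pd_rel_DQ | exact hv]. }
  set (m := fun y => pd_scal (pd_yoneda hY y) q (c y) (hc y)).
  assert (Hm : forall y, pd_is (g (m y)) q (scal_comp q (g (pd_yoneda hY y)) (c y))).
  { intros y. apply (hpres y q (c y) (hc y)); [apply pd_yoneda_is | apply pd_scal_is]. }
  assert (hP : forall r, (exists y, r = g (m y)) -> pd_q r = q).
  { intros r [y ->]. exact (proj1 (Hm y)). }
  set (rho := pd_sup q _ hP).
  assert (Hfrho : f rho ⊑ mu).
  { apply ule_PD_intro.
    - exact (eq_trans (preord_adjunction_mem (PDual X) (PDual Y) f g hg adj rho)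
                        (eq_sym (proj1 hmu))).
    - intros y. apply qle_trans with (pd_rel (m y) tt y).
      + rewrite (proj2 hmu). simpl. rewrite !scal_compE. fold (c y).
        rewrite <- (qmul_e_l _ (c y)) at 1.
        apply qmul_mono_l, qe_le_rdiv, QPreord_mem_le_one, hY.
      + apply ule_PD_rel, (adj_ule_r f g adj), pd_sup_ule. now exists y. }
  apply qle_trans with (pd_rel rho tt x).
  - apply ule_PD_rel, (adj_ule_l f g adj), Hfrho.
  - apply qsup_least. intros a [r [[y ->] ->]].
    rewrite (proj2 (Hm y)), !scal_compE, (qmono_pd_q g (pd_yoneda hY y) hg).
    apply map_yoneda_scal_comp_le, hg.
Qed.

Lemma preserves_yoneda_scal_comp_all (hY : is_QPreord Y)
  (f : PD X -> PD Y) (g : PD Y -> PD X) (hg : qmono (PDual Y) (PDual X) g)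
  (adj : preord_adjunction (PDual X) (PDual Y) f g) :
  preserves_yoneda_scal_comp g -> preserves_scal_comp g.
Proof.
  intros hpres l q v hv mu hmu.
  split; [now rewrite (qmono_pd_q g mu hg), (proj1 hmu) |].
  intros [] x. apply qle_anti.
  - exact (preserves_yoneda_scal_comp_le hY f g hg adj hpres l q v hv mu hmu x).
  - exact (qmono_scal_comp_le g hg l q v hv mu hmu x).
Qed.

Lemma preserves_scal_comp_yoneda (g : PD Y -> PD X) :
  preserves_scal_comp g -> preserves_yoneda_scal_comp g.
Proof.
  intros hpres y q v hv eta mu heta hmu.
  apply (hpres eta q v); [now rewrite (proj1 heta) | exact hmu].
Qed.

End DualAdjunctions.

Theorem proposition4p16 (Q : Quantale) (X Y : QPOS Q)
  (hX : is_QPreord X) (hY : is_QPreord Y)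
  (g : PD Y -> PD X) (hg : qmono (PDual Y) (PDual X) g) :
  let cond_i :=
    exists f : PD X -> PD Y, qmono (PDual X) (PDual Y) f /\ qadj (PDual X) (PDual Y) f g in
  let cond_ii :=
    preord_right_adjoint (PDual X) (PDual Y) g /\
    (forall (l : PD Y) (q v : Q), inDQ v q (pd_q l) ->
       forall mu : PD Y, pd_is mu q (scal_comp q l v) ->
       pd_is (g mu) q (scal_comp q (g l) v)) in
  let cond_iii :=
    preord_right_adjoint (PDual X) (PDual Y) g /\
    (forall (y : Y) (q v : Q), inDQ v q (qs_mem y) ->
       forall eta mu : PD Y, pd_is eta (qs_mem y) (yoneda_rel y) ->
       pd_is mu q (scal_comp q eta v) ->
       pd_is (g mu) q (scal_comp q (g eta) v)) in
  (cond_i <-> cond_ii) /\ (cond_ii <-> cond_iii).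
Proof.
  cbv zeta. split; split.
  - intros [f [hf hfg]]. split.
    + exists f. exact (qadj_preord_adjunction (PDual X) (PDual Y) f g hf hg hfg).
    + exact (qadj_preserves_scal_comp f g hf hg hfg).
  - intros [[f adj] hpres]. exists f. split.
    + exact (preserves_scal_comp_qmono f g hg adj hpres).
    + exact (qadj_of_preord_adjunction (PDual X) (PDual Y) f g hg adj).
  - intros [Hadj hpres]. split; [exact Hadj |].
    exact (preserves_scal_comp_yoneda g hpres).
  - intros [[f adj] hpres]. split; [now exists f |].
    exact (preserves_yoneda_scal_comp_all hY f g hg adj hpres).
Qed.
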